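(* Let $n,p,r\ge 1$, let $A_0,A_1\in\mathbb{R}^{n\times n}$, $B\in\mathbb{R}^{n\times r}$, $C\in\mathbb{R}^{p\times n}$, and consider the second order continuous-time linear system $$x''(t)=A_0x(t)+A_1x'(t)+Bu(t),\qquad x(0)=x_0,\ x'(0)=x_1,\qquad y(t)=Cx(t),$$ with state $x(t)\in\mathbb{R}^n$, input $u(t)\in\mathbb{R}^r$, output $y(t)\in\mathbb{R}^p$ and unknown initial vectors $x_0,x_1\in\mathbb{R}^n$, where $x(\cdot)$ is continuously differentiable of order $2n-1$ and $u(\cdot)$ is continuously differentiable of order $2n-3$. Define matrices $S_k,P_k\in\mathbb{R}^{n\times n}$ by $S_0=A_0$, $P_0=A_1$ and, for $k\ge1$, $S_k=P_{k-1}A_0$, $P_k=S_{k-1}+P_{k-1}A_1$. Let $\mathcal{O}(A_0,A_1,C)$ be the $(2np)\times(2n)$ block matrix whose block rows are, in order, $$\begin{bmatrix} C & 0_{p\times n}\end{bmatrix},\ \begin{bmatrix} 0_{p\times n} & C\end{bmatrix},\ \begin{bmatrix} CS_0 & CP_0\end{bmatrix},\ \dots,\ \begin{bmatrix} CS_{2n-3} & CP_{2n-3}\end{bmatrix}.$$ Then the system is observable if and only if $\mathcal{O}(A_0,A_1,C)$ has full rank, i.e. $\operatorname{rank}\mathcal{O}(A_0,A_1,C)=2n$.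
   Context: The system is called observable (on an interval $[0,t_1]$, $t_1>0$) if any initial state $(x_0,x_1)$ at $t=0$ can be uniquely determined from the knowledge of the output $y(t)$ and the input $u(t)$ over $[0,t_1]$. Here $0_{p\times n}$ denotes the $p\times n$ zero matrix. *)

From HB Require Import structures.
From mathcomp Require Import all_boot all_order all_algebra.
From mathcomp Require Import all_classical all_reals all_analysis.
Set Implicit Arguments. Unset Strict Implicit. Unset Printing Implicit Defensive.
Import Order.TTheory GRing.Theory Num.Theory.
Import numFieldNormedType.Exports.
Local Open Scope ring_scope.
Local Open Scope classical_set_scope.

Definition Ck {R : realType} {V : normedModType R} (k : nat) (f : R -> V) : Prop :=
  (forall m t, (m < k)%N -> derivable (derive1n m f) t 1) /\ continuous (derive1n k f).

Fixpoint SP {R : realType} {n : nat} (A0 A1 : 'M[R]_n) (k : nat) : 'M[R]_n * 'M[R]_n :=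
  match k with
  | 0 => (A0, A1)
  | k'.+1 => let SPk := SP A0 A1 k' in (SPk.2 *m A0, SPk.1 + SPk.2 *m A1)
  end.

Definition Smx {R : realType} {n : nat} (A0 A1 : 'M[R]_n) k := (SP A0 A1 k).1.
Definition Pmx {R : realType} {n : nat} (A0 A1 : 'M[R]_n) k := (SP A0 A1 k).2.

Definition obsmx {R : realType} {n p : nat} (A0 A1 : 'M[R]_n) (C : 'M[R]_(p, n)) :=
  col_mx (row_mx C (0 : 'M[R]_(p, n)))
    (col_mx (row_mx (0 : 'M[R]_(p, n)) C)
       (\mxcol_(k < (2 * n - 2)%N)
           (row_mx (C *m Smx A0 A1 k) (C *m Pmx A0 A1 k) : 'M[R]_(p, n + n)))).

Definition is_solution {R : realType} {n r : nat} (A0 A1 : 'M[R]_n) (B : 'M[R]_(n, r))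
    (t1 : R) (x : R -> 'cV[R]_n) (u : R -> 'cV[R]_r) : Prop :=
  [/\ Ck (2 * n - 1) x, (forall t, derivable (derive1 x) t 1), Ck (2 * n - 3) u &
      forall t, 0 <= t <= t1 -> derive1n 2 x t = A0 *m x t + A1 *m derive1 x t + B *m u t].

Definition observable_on {R : realType} {n r p : nat} (A0 A1 : 'M[R]_n) (B : 'M[R]_(n, r))
    (C : 'M[R]_(p, n)) (t1 : R) : Prop :=
  forall (u : R -> 'cV[R]_r) (x z : R -> 'cV[R]_n),
    is_solution A0 A1 B t1 x u -> is_solution A0 A1 B t1 z u ->
    (forall t, 0 <= t <= t1 -> C *m x t = C *m z t) ->
    x 0 = z 0 /\ derive1 x 0 = derive1 z 0.

From HB Require Import structures.
From mathcomp Require Import all_boot all_order all_algebra.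
From mathcomp Require Import all_classical all_reals all_analysis.
From mathcomp Require Import zify ring.
Import Order.TTheory GRing.Theory Num.Theory.
Import numFieldNormedType.Exports.
Set Implicit Arguments. Unset Strict Implicit. Unset Printing Implicit Defensive.
Local Open Scope ring_scope.

(* With the state s = (x, x'), the system reads s' = M s + (0, B u) for the block companion
   matrix M = [0 1; A0 A1], and the block rows of O(A0, A1, C) are [C 0] M^k for k < 2n
   ([C S_k  C P_k] = [C 0] M^(k+2)).  By Cayley-Hamilton, O v = 0 iff [C 0] M^k v = 0 for
   every k.  If O has full rank, the difference s of two trajectories with the same input and
   output solves s' = M s with [C 0] s = 0 on [0, t1]; differentiating, [C 0] M^k s = 0 on
   ]0, t1[, so s vanishes there and, by continuity, at 0.  Conversely, a nonzero v in the
   kernel of O gives the trajectory exp(tM) v of the free system, whose output vanishes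
   identically, just like that of the zero trajectory. *)

Section LinearAlgebra.
Variable F : fieldType.

Lemma row_full_mulmx_eq0P m n (A : 'M[F]_(m, n)) :
  reflect (forall y : 'cV_n, A *m y = 0 -> y = 0) (row_full A).
Proof.
apply: (iffP idP) => [fullA y Ay0 | injA].
  have freeAT : row_free A^T by rewrite /row_free mxrank_tr.
  apply: trmx_inj; apply/eqP.
  by rewrite trmx0 -(mulmx_free_eq0 _ freeAT) -trmx_mul Ay0 trmx0.
have kerAT0 : kermx A^T = 0.
  apply/row_matrixP => i; rewrite row0; apply: trmx_inj; rewrite trmx0.
  by apply: injA; rewrite -[A]trmxK -trmx_mul trmxK -row_mul mulmx_ker row0 trmx0.
have := mxrank_ker A^T; rewrite kerAT0 mxrank0 mxrank_tr => /esym/eqP.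
by rewrite subn_eq0 /row_full eqn_leq rank_leq_col.
Qed.

Lemma horner_mx_coef n (M : 'M[F]_n.+1) (q : {poly F}) :
  horner_mx M q = \sum_(i < size q) q`_i *: M ^+ i.
Proof.
rewrite -{1}[q]coefK poly_def raddf_sum; apply: eq_bigr => i _.
by rewrite /= horner_mxZ rmorphXn /= horner_mx_X.
Qed.

Lemma mulmx_mxpow_eq0 n q (M : 'M[F]_n) (L : 'M[F]_(q, n)) (y : 'cV[F]_n) :
  (forall k, (k < n)%N -> L *m M ^+ k *m y = 0) -> forall k, L *m M ^+ k *m y = 0.
Proof.
case: n M L y => [|n] M L y lowM0 k; first by rewrite [y]flatmx0 mulmx0.
set p := char_poly M.
have -> : M ^+ k = horner_mx M ('X^k %% p).
  have -> : M ^+ k = horner_mx M 'X^k by rewrite rmorphXn /= horner_mx_X.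
  by rewrite {1}(divp_eq 'X^k p) rmorphD rmorphM /= Cayley_Hamilton mulr0 add0r.
have : (size ('X^k %% p)%R <= n.+1)%N.
  by rewrite -ltnS -(size_char_poly M) ltn_modpN0 // monic_neq0 // char_poly_monic.
rewrite horner_mx_coef mulmx_sumr mulmx_suml => size_le; apply: big1 => i _.
by rewrite -scalemxAr -scalemxAl lowM0 ?scaler0 // (leq_trans (ltn_ord i)).
Qed.

End LinearAlgebra.

Section Companion.
Variable R : nzRingType.

Definition companion_mx n (A0 A1 : 'M[R]_n) : 'M[R]_(n + n) := block_mx 0 1%:M A0 A1.

Lemma mul_row_companion n q (A0 A1 : 'M[R]_n) (X Y : 'M[R]_(q, n)) :
  row_mx X Y *m companion_mx A0 A1 = row_mx (Y *m A0) (X + Y *m A1).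
Proof. by rewrite mul_row_block !mulmx0 mulmx1 add0r. Qed.

Lemma mul_companion_col n q (A0 A1 : 'M[R]_n) (X Y : 'M[R]_(n, q)) :
  companion_mx A0 A1 *m col_mx X Y = col_mx Y (A0 *m X + A1 *m Y).
Proof. by rewrite mul_block_col !mul0mx mul1mx add0r. Qed.

End Companion.

Section ObservabilityMatrix.
Variables (R : realType) (n p : nat) (A0 A1 : 'M[R]_n) (C : 'M[R]_(p, n)).
Local Notation M := (companion_mx A0 A1).

Lemma obsmx_rowE k :
  row_mx (C *m Smx A0 A1 k) (C *m Pmx A0 A1 k) = row_mx C 0 *m M ^+ k.+2.
Proof.
elim: k => [|k IHk]; last first.
  rewrite exprSr -mulmxE [RHS]mulmxA -IHk mul_row_companion /Smx /Pmx /=.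
  by rewrite !mulmxA mulmxDr mulmxA.
by rewrite expr2 -mulmxE mulmxA !mul_row_companion !mul0mx addr0 add0r.
Qed.

Lemma mulmx_obsmx_eq0P (y : 'cV[R]_(n + n)) : (0 < n)%N ->
  obsmx A0 A1 C *m y = 0 <-> forall k, row_mx C 0 *m M ^+ k *m y = 0.
Proof.
move=> n_gt0; set L := row_mx C 0.
have -> : obsmx A0 A1 C *m y = col_mx (L *m M ^+ 0 *m y)
    (col_mx (L *m M ^+ 1 *m y) (\mxcol_(k < 2 * n - 2) (L *m M ^+ k.+2 *m y))).
  rewrite /obsmx !mul_col_mx mxcol_mul expr0 mulmx1 expr1 mul_row_companion.
  rewrite !mul0mx addr0; congr (col_mx _ (col_mx _ _)).
  by apply: eq_mxcol => k; rewrite obsmx_rowE.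
split=> [/eqP | LMy0]; last first.
  by rewrite !LMy0 (eq_mxcol (B_ := fun=> 0)) ?mxcol0 ?col_mx0.
rewrite !col_mx_eq0 -mxcol0 => /andP[/eqP LMy0 /andP[/eqP LMy1 /eqP/eq_mxcolP LMy]].
apply: mulmx_mxpow_eq0 => -[|[|k]] // k_lt.
have k_lt' : (k < 2 * n - 2)%N by lia.
exact: (LMy (Ordinal k_lt')).
Qed.

End ObservabilityMatrix.

Arguments mulmx_obsmx_eq0P {R n p A0 A1 C y}.

Section Derivatives.
Variable R : realType.
Local Open Scope classical_set_scope.

Lemma is_derive_mxP m n (f : R -> 'M[R]_(m, n)) (df : 'M[R]_(m, n)) (t : R) :
  is_derive t 1 f df <-> forall i j, is_derive t 1 (fun s => f s i j) (df i j).
Proof.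
split=> [[derf <-] i j | dfij].
  have derfij := (derivable_mxP f t 1).1 derf i j.
  by apply: DeriveDef => //; rewrite derive_mx // mxE.
have derf : derivable f t 1 by apply/derivable_mxP => i j; exact: ex_derive.
apply: DeriveDef => //; rewrite derive_mx //; apply/matrixP => i j.
by rewrite mxE derive_val.
Qed.

Lemma is_derive_mulmx m n q (A : 'M[R]_(m, n)) (f : R -> 'M[R]_(n, q)) df (t : R) :
  is_derive t 1 f df -> is_derive t 1 (fun s => A *m f s) (A *m df).
Proof.
move=> /is_derive_mxP dfij; apply/is_derive_mxP => i j.
have -> : (fun s => (A *m f s) i j) = \sum_(k < n) A i k \*: (fun s => f s k j).
  by apply/funext => s; rewrite fct_sumE mxE.
by rewrite mxE; apply: is_derive_sum => k; exact: is_deriveZ.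
Qed.

Lemma is_derive_col_mx m1 m2 n (f : R -> 'M[R]_(m1, n)) (g : R -> 'M[R]_(m2, n))
    df dg (t : R) :
  is_derive t 1 f df -> is_derive t 1 g dg ->
  is_derive t 1 (fun s => col_mx (f s) (g s)) (col_mx df dg).
Proof.
have colE (a : 'M[R]_(m1, n)) b : col_mx a b = col_mx 1%:M 0 *m a + col_mx 0 1%:M *m b.
  by rewrite !mul_col_mx !mul1mx !mul0mx add_col_mx addr0 add0r.
move=> fdf gdg; have -> : (fun s => col_mx (f s) (g s)) =
    (fun s => col_mx 1%:M 0 *m f s) + (fun s => col_mx 0 1%:M *m g s).
  by apply/funext => s; rewrite colE.
by rewrite colE; apply: is_deriveD; exact: is_derive_mulmx.
Qed.

Lemma derivable1_continuous (V : normedModType R) (f : R -> V) (t : R) :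
  derivable f t 1 -> {for t, continuous f}.
Proof. by move=> /derivable1_diffP/differentiable_continuous. Qed.

Lemma derive1n_cst0 (V : normedModType R) k : derive1n k (cst (0 : V)) = cst 0.
Proof.
elim: k => [//|k IHk]; rewrite derive1nS IHk.
by apply/funext => t; rewrite derive1E derive_cst.
Qed.

Lemma Ck_cst0 (V : normedModType R) k : Ck k (cst (0 : V)).
Proof.
split=> [m t _ | ]; rewrite derive1n_cst0; first exact: derivable_cst.
exact: cst_continuous.
Qed.

Lemma eq0_at_left_end (V : normedModType R) (f : R -> V) (a b : R) : a < b ->
  {for a, continuous f} -> (forall t, a < t < b -> f t = 0) -> f a = 0.
Proof.
move=> ab fa f0; have fa_right := cvg_at_right_filter fa.
have : f x @[x --> a^'+] --> (0 : V).
  apply: cvg_near_cst; near=> x; apply: f0; apply/andP; split.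
    by near: x; exact: nbhs_right_gt.
  by near: x; exact: nbhs_right_lt.
by rewrite -(cvg_lim _ fa_right) // => /cvg_lim ->.
Unshelve. all: by end_near.
Qed.

Lemma mulmx_mxpow_eq0_itv N q (M : 'M[R]_N) (L : 'M[R]_(q, N)) (s : R -> 'cV[R]_N) (a b : R) :
  (forall t, a < t < b -> is_derive t 1 s (M *m s t)) ->
  (forall t, a < t < b -> L *m s t = 0) ->
  forall k t, a < t < b -> L *m M ^+ k *m s t = 0.
Proof.
move=> ds Ls0; elim=> [|k IHk] t tab; first by rewrite expr0 mulmx1 Ls0.
rewrite exprSr -mulmxE -mulmxA -[M ^+ k *m _ *m _]mulmxA mulmxA.
have [_ <-] := is_derive_mulmx (L *m M ^+ k) (ds t tab).
rewrite (near_eq_derive (g := cst 0)) ?derive_cst //.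
have : t \in `]a, b[%R by rewrite in_itv.
move=> /near_in_itvoo; apply: filterS => t'.
by rewrite in_itv => /IHk.
Qed.

End Derivatives.

Definition sum_abs {R : numDomainType} m n (A : 'M[R]_(m, n)) : R := \sum_i \sum_j `|A i j|.

Section EntrywiseL1Norm.
Variable R : numDomainType.

Lemma sum_abs_ge0 m n (A : 'M[R]_(m, n)) : 0 <= sum_abs A.
Proof. by apply: sumr_ge0 => i _; apply: sumr_ge0. Qed.

Lemma ler_abs_sum_abs m n (A : 'M[R]_(m, n)) i j : `|A i j| <= sum_abs A.
Proof.
have row_ge : `|A i j| <= \sum_j `|A i j| by rewrite (bigD1 j) //= lerDl sumr_ge0.
by rewrite (le_trans row_ge) // /sum_abs (bigD1 i) //= lerDl sumr_ge0 // => *; apply: sumr_ge0.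
Qed.

Lemma sum_abs_mulmx m n q (A : 'M[R]_(m, n)) (B : 'M[R]_(n, q)) :
  sum_abs (A *m B) <= sum_abs A * sum_abs B.
Proof.
rewrite /sum_abs mulr_suml; apply: ler_sum => i _.
apply: (@le_trans _ _ (\sum_j \sum_k `|A i k| * `|B k j|)).
  apply: ler_sum => j _; rewrite mxE (le_trans (ler_norm_sum _ _ _)) //.
  by apply: ler_sum => k _; rewrite normrM.
rewrite exchange_big mulr_suml; apply: ler_sum => k _; rewrite -mulr_sumr ler_wpM2l //.
by rewrite (bigD1 k) //= lerDl sumr_ge0 // => *; apply: sumr_ge0.
Qed.

Lemma sum_abs_mxpow n q (M : 'M[R]_n) (B : 'M[R]_(n, q)) k :
  sum_abs (M ^+ k *m B) <= sum_abs M ^+ k * sum_abs B.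
Proof.
elim: k => [|k IHk]; first by rewrite expr0 mul1mx mul1r.
rewrite exprS -mulmxE -mulmxA exprS -mulrA (le_trans (sum_abs_mulmx _ _)) //.
by rewrite ler_wpM2l // sum_abs_ge0.
Qed.

End EntrywiseL1Norm.

Definition expmx_coef {R : realType} n (M : 'M[R]_n) (v : 'cV[R]_n) i : R^nat :=
  fun k => (M ^+ k *m v) i 0 / k`!%:R.

Definition expmxv {R : realType} n (M : 'M[R]_n) (v : 'cV[R]_n) (t : R) : 'cV[R]_n :=
  \col_i limn (pseries (expmx_coef M v i) t).

Section MatrixExponential.
Variables (R : realType) (n : nat) (M : 'M[R]_n).
Local Open Scope classical_set_scope.

Lemma is_cvg_pseries_expmx_coef v i (t : R) : cvgn (pseries (expmx_coef M v i) t).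
Proof.
apply: normed_cvg; rewrite /normed_series_of /=.
set c := sum_abs M * `|t|.
apply: (@series_le_cvg _ _ (fun k => sum_abs v * exp_coeff c k)) => [k|k|k|].
- by [].
- by rewrite mulr_ge0 ?sum_abs_ge0 // divr_ge0 // exprn_ge0 // mulr_ge0 ?sum_abs_ge0.
- rewrite /exp_coeff /expmx_coef /= normrM normrM normfV normrX [`|k`!%:R|]ger0_norm //.
  have entry_le := le_trans (ler_abs_sum_abs _ i 0) (sum_abs_mxpow M v k).
  rewrite exprMn.
  have -> : sum_abs v * (sum_abs M ^+ k * `|t| ^+ k / k`!%:R) =
    sum_abs M ^+ k * sum_abs v * (`|t| ^+ k / k`!%:R) by ring.
  have -> : `|(M ^+ k *m v) i 0| / k`!%:R * `|t| ^+ k =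
    `|(M ^+ k *m v) i 0| * (`|t| ^+ k / k`!%:R) by ring.
  by rewrite ler_wpM2r // divr_ge0 // exprn_ge0.
- exact: (is_cvg_seriesZ (k := sum_abs v) (is_cvg_series_exp_coeff c)).
Qed.

Lemma pseries_diffs_expmx_coef v i :
  pseries_diffs (expmx_coef M v i) = expmx_coef M (M *m v) i.
Proof.
apply/funext => k; rewrite /pseries_diffs /expmx_coef exprSr -mulmxE -mulmxA factS natrM.
have k1_neq0 : 1 + k%:R != 0 :> R by rewrite addrC natr1.
have kfact_neq0 : k`!%:R != 0 :> R by rewrite pnatr_eq0 -lt0n fact_gt0.
by field; rewrite k1_neq0 kfact_neq0.
Qed.

Lemma pseries_mulmx_expmxv q (L : 'M[R]_(q, n)) (v : 'cV[R]_n) (t : R) i :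
  pseries (fun k => (L *m M ^+ k *m v) i 0 / k`!%:R) t @ \oo --> (L *m expmxv M v t) i 0.
Proof.
have -> : pseries (fun k => (L *m M ^+ k *m v) i 0 / k`!%:R) t =
    fun m => \sum_j L i j * pseries (expmx_coef M v j) t m.
  apply/funext => m; rewrite /pseries /series /=.
  under [RHS]eq_bigr do rewrite big_distrr /=.
  rewrite exchange_big /=; apply: eq_bigr => k _.
  rewrite -mulmxA mxE !mulr_suml; apply: eq_bigr => j _.
  by rewrite /expmx_coef !mulrA.
rewrite mxE; apply: cvg_big => [|j _]; first exact: add_continuous.
rewrite mxE; apply: cvgM; first exact: cvg_cst.
exact: is_cvg_pseries_expmx_coef.
Qed.

Lemma expmxv_mulmx v (t : R) : expmxv M (M *m v) t = M *m expmxv M v t.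
Proof.
apply/matrixP => i j; rewrite [j]ord1 [LHS]mxE; apply: cvg_lim => //.
have -> : expmx_coef M (M *m v) i = fun k => (M *m M ^+ k *m v) i 0 / k`!%:R.
  by apply/funext => k; rewrite /expmx_coef mulmxA mulmxE -exprSr exprS -mulmxE.
exact: pseries_mulmx_expmxv.
Qed.

Lemma mulmx_expmxv_eq0 q (L : 'M[R]_(q, n)) v (t : R) :
  (forall k, L *m M ^+ k *m v = 0) -> L *m expmxv M v t = 0.
Proof.
move=> LMv0; apply/matrixP => i j; rewrite [j]ord1 [RHS]mxE.
rewrite -(cvg_lim _ (@pseries_mulmx_expmxv _ L v t i)) //.
have -> : pseries (fun k => (L *m M ^+ k *m v) i 0 / k`!%:R) t = cst 0.
  by apply/funext => m; apply: big1 => k _; rewrite /= LMv0 mxE !mul0r.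
exact: lim_cst.
Qed.

Lemma expmxv0 v : expmxv M v 0 = v.
Proof.
apply/matrixP => i j; rewrite [j]ord1 mxE; apply: cvg_lim => //; rewrite -cvg_shiftS.
have -> : (fun m => pseries (expmx_coef M v i) 0 m.+1) = cst (v i 0).
  apply/funext => m; rewrite /pseries /series /= big_nat_recl //= big1 ?addr0.
    by rewrite /expmx_coef !expr0 mul1mx fact0 divr1 mulr1.
  by move=> k _; rewrite expr0n mulr0.
exact: cvg_cst.
Qed.

Lemma is_derive_expmxv v (t : R) : is_derive t 1 (expmxv M v) (M *m expmxv M v t).
Proof.
rewrite -expmxv_mulmx; apply/is_derive_mxP => i j; rewrite mxE.
have -> : (fun s => expmxv M v s i j) = fun s => limn (pseries (expmx_coef M v i) s).
  by apply/funext => s; rewrite mxE.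
rewrite -pseries_diffs_expmx_coef; apply: (pseries_snd_diffs (K := `|t| + 1)).
- exact: is_cvg_pseries_expmx_coef.
- by rewrite pseries_diffs_expmx_coef; exact: is_cvg_pseries_expmx_coef.
- by rewrite !pseries_diffs_expmx_coef; exact: is_cvg_pseries_expmx_coef.
- by rewrite [`|_ + 1|]ger0_norm ?ltrDl // addr_ge0.
Qed.

Lemma derive1n_mulmx_expmxv q (L : 'M[R]_(q, n)) v k :
  derive1n k (fun t => L *m expmxv M v t) = fun t => L *m M ^+ k *m expmxv M v t.
Proof.
elim: k => [|k IHk]; first by apply/funext => t; rewrite expr0 mulmx1.
rewrite derive1nS IHk; apply/funext => t; rewrite derive1E.
have [_ ->] := is_derive_mulmx (L *m M ^+ k) (is_derive_expmxv v t).
by rewrite exprSr -mulmxE !mulmxA.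
Qed.

Lemma derivable_mulmx_expmxv q (L : 'M[R]_(q, n)) v k (t : R) :
  derivable (derive1n k (fun t => L *m expmxv M v t)) t 1.
Proof.
rewrite derive1n_mulmx_expmxv.
by have [] := is_derive_mulmx (L *m M ^+ k) (is_derive_expmxv v t).
Qed.

Lemma Ck_mulmx_expmxv q (L : 'M[R]_(q, n)) v k : Ck k (fun t => L *m expmxv M v t).
Proof.
split=> [m t _ | t]; first exact: derivable_mulmx_expmxv.
exact/derivable1_continuous/derivable_mulmx_expmxv.
Qed.

End MatrixExponential.

Definition state {R : realType} n (x : R -> 'cV[R]_n) (t : R) : 'cV[R]_(n + n) :=
  col_mx (x t) (derive1 x t).

Section SecondOrderSystem.
Variables (R : realType) (n r : nat) (A0 A1 : 'M[R]_n) (B : 'M[R]_(n, r)) (t1 : R).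
Local Notation M := (companion_mx A0 A1).

Lemma is_derive_state x u (t : R) : (0 < n)%N -> is_solution A0 A1 B t1 x u -> 0 <= t <= t1 ->
  is_derive t 1 (state x) (M *m state x t + col_mx 0 (B *m u t)).
Proof.
move=> n_gt0 [[derx _] derx' _ ode] tt1.
have dx : is_derive t 1 x (derive1 x t).
  by rewrite derive1E; apply: derivableP; apply: (derx 0%N); lia.
have dx' : is_derive t 1 (derive1 x) (derive1n 2 x t).
  by rewrite /= derive1E; apply: derivableP.
apply: is_derive_eq (is_derive_col_mx dx dx') _.
by rewrite mul_companion_col add_col_mx addr0 ode.
Qed.

Lemma is_solution_cst0 : is_solution A0 A1 B t1 (cst 0) (cst 0).
Proof.
split; [exact: Ck_cst0 | | exact: Ck_cst0 | ].
- by move=> t; rewrite -derive1n1 derive1n_cst0; exact: derivable_cst.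
- by move=> t _; rewrite derive1n_cst0 -derive1n1 derive1n_cst0 /cst !mulmx0 !addr0.
Qed.

Lemma is_solution_expmxv v :
  is_solution A0 A1 B t1 (fun t => row_mx 1%:M 0 *m expmxv M v t) (cst 0).
Proof.
have PM : row_mx 1%:M 0 *m M = row_mx 0 1%:M.
  by rewrite mul_row_companion !mul0mx addr0.
have PM2 : row_mx 1%:M 0 *m M ^+ 2 = row_mx A0 A1.
  by rewrite expr2 -mulmxE mulmxA PM mul_row_companion !mul1mx add0r.
split; [exact: Ck_mulmx_expmxv | | exact: Ck_cst0 | ].
- by move=> t; exact: (derivable_mulmx_expmxv (k := 1)).
move=> t _; rewrite -derive1n1 !derive1n_mulmx_expmxv expr1 PM PM2 /cst mulmx0 addr0.
by rewrite !mulmxA -mulmxDl !mul_mx_row !mulmx0 !mulmx1 add_row_mx addr0 add0r.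
Qed.

End SecondOrderSystem.

Section Observability.
Variables (R : realType) (n p r : nat) (A0 A1 : 'M[R]_n) (B : 'M[R]_(n, r)).
Variables (C : 'M[R]_(p, n)) (t1 : R).
Hypothesis n_gt0 : (0 < n)%N.
Local Notation M := (companion_mx A0 A1).

Lemma row_full_obsmx_observable :
  0 < t1 -> row_full (obsmx A0 A1 C) -> observable_on A0 A1 B C t1.
Proof.
move=> t1_gt0 /row_full_mulmx_eq0P obs_inj u x z solx solz Cxz.
set s := state x - state z.
have ds t : 0 <= t <= t1 -> is_derive t 1 s (M *m s t).
  move=> tt1; apply: is_derive_eq.
    exact: is_deriveB (is_derive_state n_gt0 solx tt1) (is_derive_state n_gt0 solz tt1).
  (* The explicit pattern stops [subrr] from trying to unify [state x t] with [state z t]. *)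
  by rewrite opprD addrACA (subrr (col_mx _ _)) addr0 -mulmxBr.
have Cs0 t : 0 <= t <= t1 -> row_mx C 0 *m s t = 0.
  by move=> tt1; rewrite mulmxBr !mul_row_col !mul0mx !addr0 Cxz // subrr.
have s0_itv t : 0 < t < t1 -> s t = 0.
  move=> tt1; apply/obs_inj/(mulmx_obsmx_eq0P n_gt0) => k.
  by apply: (mulmx_mxpow_eq0_itv _ _ k tt1) => t' /andP[t'0 t't1];
    [apply: ds | apply: Cs0]; rewrite (ltW t'0) (ltW t't1).
have /eqP : s 0 = 0.
  apply: (eq0_at_left_end t1_gt0 _ s0_itv).
  have [ds0 _] : is_derive (0 : R) 1 s (M *m s 0) by apply: ds; rewrite lexx (ltW t1_gt0).
  exact: derivable1_continuous ds0.
by rewrite subr_eq0 => /eqP/eq_col_mx.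
Qed.

Lemma observable_row_full_obsmx :
  observable_on A0 A1 B C t1 -> row_full (obsmx A0 A1 C).
Proof.
move=> obs; apply/row_full_mulmx_eq0P => y /(mulmx_obsmx_eq0P n_gt0) LMy0.
have [|x0 x'0] := obs _ _ _ (is_solution_expmxv A0 A1 B t1 y) (is_solution_cst0 A0 A1 B t1).
  move=> t _; rewrite /cst mulmx0 mulmxA mul_mx_row mulmx1 mulmx0.
  exact: mulmx_expmxv_eq0.
move: x0 x'0; rewrite derive1_cst -derive1n1 derive1n_mulmx_expmxv /=.
rewrite expr1 !expmxv0 mul_row_companion !mul0mx addr0 -[y]vsubmxK !mul_row_col.
by rewrite !mul1mx !mul0mx addr0 add0r => -> ->; rewrite col_mx0.
Qed.

End Observability.

Theorem theorem3p1 (R : realType) (n p r : nat) (A0 A1 : 'M[R]_n) (B : 'M[R]_(n, r))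
    (C : 'M[R]_(p, n)) (t1 : R) :
  (1 <= n)%N -> (1 <= p)%N -> (1 <= r)%N -> 0 < t1 ->
  (observable_on A0 A1 B C t1 <-> \rank (obsmx A0 A1 C) = (2 * n)%N).
Proof.
move=> n_gt0 _ _ t1_gt0.
have rankE k : (k == 2 * n)%N = (k == n + n)%N by rewrite mul2n addnn.
split=> [obs | rk].
  by apply/eqP; rewrite rankE; exact: observable_row_full_obsmx n_gt0 obs.
by apply: (row_full_obsmx_observable n_gt0 t1_gt0); rewrite /row_full -rankE rk.
Qed.
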